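(* Let $R$ be a commutative ring with $1\neq 0$ and $M$ a faithful prime $R$-module which is a comultiplication module satisfying the double annihilator condition (i.e., $M$ is $S$-strong comultiplication for $S=\{1\}$). If $N$ is a submodule of $M$ such that $N=(0:_M I)$ for some essential ideal $I$ of $R$, then $N$ is a small submodule of $M$.
   Context: All rings are commutative with $1\neq 0$ and all modules are unital. For an ideal $I$ of $R$, $(0:_M I)=\{m\in M: Im=0\}$; $\mathrm{Ann}_R(X)=\{r\in R: rX=0\}$; $M$ is faithful if $\mathrm{Ann}_R(M)=0$; $M$ is prime if $\mathrm{Ann}_R(L)=\mathrm{Ann}_R(M)$ for every nonzero submodule $L$ of $M$. $M$ is a comultiplication module if for each submodule $N$ of $M$ there is an ideal $I$ of $R$ with $N=(0:_M I)$. $M$ satisfies the double annihilator condition if $\mathrm{Ann}_R((0:_M I))\subseteq I$ for every ideal $I$ of $R$. An ideal $I$ is essential in $R$ if $I\cap J=0$ implies $J=0$ for ideals $J$; a submodule $N$ is small in $M$ if $M=N+L$ implies $L=M$. *)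

From mathcomp Require Import all_boot all_algebra.
Set Implicit Arguments. Unset Strict Implicit. Unset Printing Implicit Defensive.
Import GRing.Theory.
Local Open Scope ring_scope.

Section ModuleDefs.
Variables (R : comNzRingType) (M : lmodType R).

Definition is_ideal (I : R -> Prop) : Prop :=
  [/\ I 0, (forall x y, I x -> I y -> I (x + y)) & (forall r x, I x -> I (r * x))].

Definition is_submodule (N : M -> Prop) : Prop :=
  [/\ N 0, (forall x y, N x -> N y -> N (x + y)) & (forall r x, N x -> N (r *: x))].

Definition colon0 (I : R -> Prop) : M -> Prop :=
  fun m => forall r, I r -> r *: m = 0.

Definition Ann (X : M -> Prop) : R -> Prop :=
  fun r => forall m, X m -> r *: m = 0.

Definition faithful_mod : Prop := forall r, Ann (fun _ => True) r -> r = 0.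

Definition prime_mod : Prop :=
  forall L : M -> Prop, is_submodule L -> (exists2 m, L m & m != 0) ->
    forall r, Ann L r <-> Ann (fun _ => True) r.

Definition comultiplication_mod : Prop :=
  forall N : M -> Prop, is_submodule N ->
    exists2 I : R -> Prop, is_ideal I & forall m, N m <-> colon0 I m.

Definition double_ann_cond : Prop :=
  forall I : R -> Prop, is_ideal I -> forall r, Ann (colon0 I) r -> I r.

Definition small_submodule (N : M -> Prop) : Prop :=
  forall L : M -> Prop, is_submodule L ->
    (forall m, exists n l, [/\ N n, L l & m = n + l]) -> forall m, L m.

End ModuleDefs.

Definition essential_ideal (R : comNzRingType) (I : R -> Prop) : Prop :=
  forall J : R -> Prop, is_ideal J -> (forall x, I x -> J x -> x = 0) ->
    forall x, J x -> x = 0.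

From mathcomp Require Import all_boot all_algebra.
Local Open Scope ring_scope.
Import GRing.Theory.

(* Let L be a submodule with N + L = M, where N = (0 :_M I).
   An element x of I ∩ Ann(L) kills both N and L, hence kills N + L = M,
   so x = 0 by faithfulness.  Thus the ideal Ann(L) meets the essential
   ideal I trivially, and therefore Ann(L) = 0.  By the comultiplication
   property L = (0 :_M J) for some ideal J; since J ⊆ Ann((0 :_M J)) = Ann(L),
   J = 0 and L = (0 :_M 0) = M. *)

Section Annihilators.
Variables (R : comNzRingType) (M : lmodType R).

Lemma Ann_is_ideal (X : M -> Prop) : is_ideal (Ann X).
Proof.
split.
- by move=> m _; rewrite scale0r.
- by move=> x y hx hy m hm; rewrite scalerDl hx // hy // addr0.
- by move=> r x hx m hm; rewrite -scalerA hx // scaler0.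
Qed.

Lemma sub_Ann_colon0 {J : R -> Prop} {x : R} : J x -> Ann (colon0 (M:=M) J) x.
Proof. by move=> hx m hm; apply: hm. Qed.

Lemma Ann_sum_cover {N L : M -> Prop} {x : R} :
  (forall m, exists n l, [/\ N n, L l & m = n + l]) ->
  Ann N x -> Ann L x -> Ann (fun _ : M => True) x.
Proof.
move=> hcover hxN hxL m _; have [n [l [hn hl ->]]] := hcover m.
by rewrite scalerDr hxN // hxL // addr0.
Qed.

(* In a comultiplication module, a submodule with zero annihilator is the
   whole module: writing L = (0 :_M J), the ideal J lies in Ann(L) = 0. *)
Lemma comul_Ann0_full (L : M -> Prop) :
  comultiplication_mod M -> is_submodule L ->
  (forall x, Ann L x -> x = 0) -> forall m, L m.
Proof.
move=> hcomul hL hAnn0 m; have [J _ hLJ] := hcomul L hL.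
have hJ0 x : J x -> x = 0.
  move=> hx; apply: hAnn0 => l /hLJ hl; exact: sub_Ann_colon0 hl.
by apply/hLJ => r /hJ0 ->; rewrite scale0r.
Qed.

End Annihilators.

Theorem proposition2p4 (R : comNzRingType) (M : lmodType R)
  (hfaith : faithful_mod M) (hprime : prime_mod M)
  (hcomul : comultiplication_mod M) (hdac : double_ann_cond M)
  (N : M -> Prop) (I : R -> Prop)
  (hI : is_ideal I) (hess : essential_ideal I)
  (hN : forall m, N m <-> colon0 I m) :
  small_submodule N.
Proof.
move=> L hL hcover; apply: comul_Ann0_full => //.
(* Ann(L) meets I trivially, so it vanishes since I is essential. *)
apply: hess; first exact: Ann_is_ideal.
move=> x hxI hxL; apply: hfaith.
have hxN : Ann N x by move=> n /hN; apply.
exact: Ann_sum_cover hcover hxN hxL.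
Qed.
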